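(* For all integers $m\ge1$, $r\ge0$ and $n\ge0$, $$\mathcal E_n(x)=\sum_{k=0}^n\sum_{l=k}^n\binom nl\,\mathcal E_{n-l}\,w_{m,r}(l,k)\,\mathcal D_{m,r}(k,x).$$
   Context: The Euler polynomials are defined by $\sum_{n\ge0}\mathcal E_n(x)\frac{t^n}{n!}=\frac{2e^{xt}}{e^t+1}$ and $\mathcal E_n:=\mathcal E_n(0)$. For integers $m\ge1$, $n,k,r\ge0$: the $r$-Whitney numbers of the first kind $w_{m,r}(n,k)$ are defined by $\sum_{n\ge k}w_{m,r}(n,k)\frac{z^n}{n!}=(1+mz)^{-r/m}\frac{\ln^k(1+mz)}{m^kk!}$; the $r$-Whitney numbers of the second kind $W_{m,r}(n,k)$ by $\sum_{n\ge k}W_{m,r}(n,k)\frac{z^n}{n!}=\frac{e^{rz}}{k!}\left(\frac{e^{mz}-1}{m}\right)^k$; and the $r$-Dowling polynomial is $\mathcal D_{m,r}(n,u):=\sum_{k=0}^nW_{m,r}(n,k)u^k$. *)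

(* Exponential generating functions are represented by their
   coefficient sequences: a series  sum_n f n * z^n / n!  is the function f. *)
From HB Require Import structures.
From mathcomp Require Import all_boot all_order all_algebra.
Set Implicit Arguments. Unset Strict Implicit. Unset Printing Implicit Defensive.
Import Order.TTheory GRing.Theory Num.Theory.
Local Open Scope ring_scope.

Section EGF.
Variable R : numFieldType.

Definition egf_one : nat -> R := fun n => (n == 0)%:R.
Definition egf_add (f g : nat -> R) : nat -> R := fun n => f n + g n.
Definition egf_sub (f g : nat -> R) : nat -> R := fun n => f n - g n.
Definition egf_scale (c : R) (f : nat -> R) : nat -> R := fun n => c * f n.
(* product of EGFs = binomial convolution of coefficients *)
Definition egf_mul (f g : nat -> R) : nat -> R :=
  fun n => \sum_(k < n.+1) 'C(n, k)%:R * f k * g (n - k)%N.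
Definition egf_pow (f : nat -> R) (k : nat) : nat -> R := iter k (egf_mul f) egf_one.
Definition egf_exp (c : R) : nat -> R := fun n => c ^+ n.
(* ln(1 + c z) = sum_{n>=1} (-1)^{n-1} c^n z^n / n *)
Definition egf_log1p (c : R) : nat -> R :=
  fun n => if n is 0 then 0 else (-1) ^+ n.-1 * c ^+ n * n`!%:R / n%:R.
(* (1 + c z)^a = sum_n binom(a,n) c^n z^n, binom(a,n) = prod_{i<n}(a-i)/n! *)
Definition egf_binom (a c : R) : nat -> R :=
  fun n => \prod_(i < n) (a - i%:R) * c ^+ n.
(* multiplicative inverse of an EGF with nonzero constant term *)
Fixpoint egf_inv_aux (f : nat -> R) (fuel n : nat) : R :=
  match fuel with
  | 0 => (f 0%N)^-1
  | fuel'.+1 =>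
      if n == 0%N then (f 0%N)^-1
      else - (f 0%N)^-1 *
           \sum_(k < n) 'C(n, k.+1)%:R * f k.+1 * egf_inv_aux f fuel' (n - k.+1)%N
  end.
Definition egf_inv (f : nat -> R) : nat -> R := fun n => egf_inv_aux f n n.

End EGF.

(* Euler polynomials: sum_n E_n(x) t^n/n! = 2 e^{xt} / (e^t + 1) *)
Definition euler_poly (R : numFieldType) (n : nat) (x : R) : R :=
  egf_mul (egf_scale 2 (egf_exp x)) (egf_inv (egf_add (egf_exp 1) (@egf_one R))) n.
Definition euler_num (R : numFieldType) (n : nat) : R := euler_poly n 0.

(* r-Whitney numbers of the first kind:
   sum_n w(n,k) z^n/n! = (1+mz)^{-r/m} ln^k(1+mz) / (m^k k!) *)
Definition whitney1 (R : numFieldType) (m r n k : nat) : R :=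
  egf_mul (egf_binom (- (r%:R / m%:R)) m%:R)
          (egf_scale ((m%:R ^+ k * k`!%:R)^-1) (egf_pow (egf_log1p (m%:R : R)) k)) n.

(* r-Whitney numbers of the second kind:
   sum_n W(n,k) z^n/n! = e^{rz}/k! * ((e^{mz}-1)/m)^k *)
Definition whitney2 (R : numFieldType) (m r n k : nat) : R :=
  egf_mul (egf_exp r%:R)
          (egf_scale (k`!%:R^-1)
             (egf_pow (egf_scale (m%:R^-1) (egf_sub (egf_exp (m%:R : R)) (@egf_one R))) k)) n.

Definition dowling (R : numFieldType) (m r n : nat) (u : R) : R :=
  \sum_(k < n.+1) whitney2 R m r n k * u ^+ k.

From HB Require Import structures.
From mathcomp Require Import all_boot all_order all_algebra.
From mathcomp Require Import ring.
From Stdlib Require Import FunctionalExtensionality.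
Import Order.TTheory GRing.Theory Num.Theory.
Local Open Scope ring_scope.

(* Differentiating the generating functions ((1 + mz) d/dz for the first kind,
   d/dz for the second) gives the triangular recurrences
     w(n+1,k) = -(r + mn) w(n,k) + w(n,k-1),   W(n+1,k) = (r + mk) W(n,k) + W(n,k-1).
   Two such triangles whose diagonal coefficients are opposite are inverse
   matrices, hence sum_k w(l,k) D_{m,r}(k,x) = x^l.  Substituting this into the
   Appell expansion E_n(x) = sum_l C(n,l) E_{n-l} x^l gives the identity. *)

Section TriangularRecurrences.
Context {R : comPzRingType}.

Lemma triangular_rec_eq0 {e f : nat -> nat -> R} :
  (forall k, f 0 k = (k == 0)%:R) ->
  (forall n k, f n.+1 k = e n k * f n k + (if k is k'.+1 then f n k' else 0)) ->
  forall n k, (n < k)%N -> f n k = 0.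
Proof.
move=> f0 fS; elim=> [|n IH] [|k] // ltnk.
by rewrite fS !IH ?mulr0 ?addr0 // ltnW.
Qed.

Context {c : nat -> R} {a b : nat -> nat -> R}.
Hypothesis a0 : forall k, a 0 k = (k == 0)%:R.
Hypothesis b0 : forall j, b 0 j = (j == 0)%:R.
Hypothesis aS :
  forall l k, a l.+1 k = - c l * a l k + (if k is k'.+1 then a l k' else 0).
Hypothesis bS :
  forall k j, b k.+1 j = c j * b k j + (if j is j'.+1 then b k j' else 0).

Lemma triangular_rec_inverse N l j :
  (l < N)%N -> \sum_(k < N) a l k * b k j = (l == j)%:R.
Proof.
elim: l N j => [|l IH] [|N] j // ltlN.
  rewrite big_ord_recl a0 mul1r b0 eq_sym big1 ?addr0 // => k _.
  by rewrite a0 mul0r.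
have shifted : \sum_(k < N.+1) (if (k : nat) is k'.+1 then a l k' else 0) * b k j
    = c j * (l == j)%:R + (if j is j'.+1 then (l == j')%:R else 0).
  rewrite big_ord_recl mul0r add0r.
  under eq_bigr => k _ do rewrite /= bS mulrDr mulrCA.
  rewrite big_split /= -mulr_sumr IH //.
  case: j => [|j]; last by rewrite IH.
  by rewrite big1 ?addr0 // => k _; rewrite mulr0.
under eq_bigr => k _ do rewrite aS mulrDl -mulrA.
rewrite big_split /= -mulr_sumr IH ?(ltnW ltlN) // shifted addrA -mulrDl.
have -> : (- c l + c j) * (l == j)%:R = 0.
  by case: eqVneq => [->|_]; rewrite ?addNr ?mul0r ?mulr0.
by rewrite add0r; case: j {shifted}.
Qed.

Lemma triangular_rec_inverse_pow N l (x : R) : (l < N)%N ->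
  \sum_(k < N) a l k * \sum_(j < k.+1) b k j * x ^+ j = x ^+ l.
Proof.
move=> ltlN; have b_lt := triangular_rec_eq0 b0 bS.
transitivity (\sum_(k < N) \sum_(j < N) a l k * (b k j * x ^+ j)).
  apply: eq_bigr => k _.
  rewrite mulr_sumr (big_ord_widen N (fun j => a l k * (b k j * x ^+ j))) //.
  rewrite big_mkcond /=.
  by apply: eq_bigr => j _; case: ltnP => // ltkj; rewrite b_lt // mul0r mulr0.
rewrite exchange_big /=.
transitivity (\sum_(j < N) (l == j)%:R * x ^+ j).
  apply: eq_bigr => j _; rewrite -(triangular_rec_inverse _ _ j ltlN) mulr_suml.
  by apply: eq_bigr => k _; rewrite mulrA.
under eq_bigr => j _ do rewrite eq_sym mulr_natl mulrb.
by rewrite -big_mkcond big_ord1_eq ltlN.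
Qed.
End TriangularRecurrences.

Section EGFCalculus.
Context {R : numFieldType}.
Implicit Types (f g : nat -> R) (c : R).

Definition egf_deriv f : nat -> R := fun n => f n.+1.
Definition egf_zderiv f : nat -> R := fun n => n%:R * f n.
(* The derivation (1 + c z) d/dz, i.e. d/du for the variable u = ln(1 + c z) / c. *)
Definition egf_deriv_1p c f : nat -> R :=
  egf_add (egf_deriv f) (egf_scale c (egf_zderiv f)).

Lemma egf_mul0 f g : egf_mul f g 0 = f 0 * g 0.
Proof. by rewrite /egf_mul big_ord_recl big_ord0 bin0 mul1r addr0 subn0. Qed.

Lemma egf_mulDl f1 f2 g n :
  egf_mul (egf_add f1 f2) g n = egf_mul f1 g n + egf_mul f2 g n.
Proof.
by rewrite /egf_mul -big_split /=; apply: eq_bigr => i _; rewrite /egf_add; ring.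
Qed.

Lemma egf_mulDr f g1 g2 n :
  egf_mul f (egf_add g1 g2) n = egf_mul f g1 n + egf_mul f g2 n.
Proof.
by rewrite /egf_mul -big_split /=; apply: eq_bigr => i _; rewrite /egf_add; ring.
Qed.

Lemma egf_mulZl c f g n : egf_mul (egf_scale c f) g n = c * egf_mul f g n.
Proof.
by rewrite /egf_mul mulr_sumr; apply: eq_bigr => i _; rewrite /egf_scale; ring.
Qed.

Lemma egf_mulZr c f g n : egf_mul f (egf_scale c g) n = c * egf_mul f g n.
Proof.
by rewrite /egf_mul mulr_sumr; apply: eq_bigr => i _; rewrite /egf_scale; ring.
Qed.

Lemma egf_mul1l f n : egf_mul (egf_one R) f n = f n.
Proof.
rewrite /egf_mul big_ord_recl big1 => [|i _]; last by rewrite /egf_one mulr0 mul0r.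
by rewrite bin0 subn0 addr0 /egf_one !mul1r.
Qed.

Lemma egf_deriv_mul f g n :
  egf_deriv (egf_mul f g) n = egf_mul (egf_deriv f) g n + egf_mul f (egf_deriv g) n.
Proof.
rewrite /egf_mul /egf_deriv big_ord_recl /=.
under eq_bigr => i _ do rewrite /bump /= binS natrD !mulrDl subSS.
rewrite big_split /= [LHS]addrC [X in X + _]addrC -addrA; congr (_ + _).
rewrite [in RHS]big_ord_recl [X in X + _ = _]big_ord_recr /= bin_small //.
rewrite !mul0r addr0 addrC !bin0 !subn0; congr (_ + _).
by apply: eq_bigr => i _; rewrite /bump /= subnSK.
Qed.

Lemma egf_zderiv_mul f g n :
  egf_zderiv (egf_mul f g) n = egf_mul (egf_zderiv f) g n + egf_mul f (egf_zderiv g) n.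
Proof.
rewrite /egf_zderiv /egf_mul mulr_sumr -big_split; apply: eq_bigr => i _ /=.
have -> : n%:R = i%:R + (n - i)%:R :> R by rewrite -natrD subnKC // -ltnS.
ring.
Qed.

Lemma egf_deriv_1p_mul c f g n :
  egf_deriv_1p c (egf_mul f g) n =
  egf_mul (egf_deriv_1p c f) g n + egf_mul f (egf_deriv_1p c g) n.
Proof.
rewrite /egf_deriv_1p !egf_mulDl !egf_mulDr !egf_mulZl !egf_mulZr.
rewrite /egf_add /egf_scale egf_deriv_mul egf_zderiv_mul; ring.
Qed.

Lemma egf_deriv_1p_scale c a f :
  egf_deriv_1p c (egf_scale a f) = egf_scale a (egf_deriv_1p c f).
Proof.
apply: functional_extensionality => n.
by rewrite /egf_deriv_1p /egf_add /egf_scale /egf_deriv /egf_zderiv; ring.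
Qed.

Lemma egf_deriv_1pE c f n : f n.+1 = egf_deriv_1p c f n - c * (n%:R * f n).
Proof. by rewrite /egf_deriv_1p /egf_add /egf_scale /egf_zderiv addrK. Qed.

End EGFCalculus.

Section WhitneyGeneratingFunctions.
Context {R : numFieldType}.
Implicit Types (a c : R).

Definition egf_expm1 c : nat -> R :=
  egf_scale c^-1 (egf_sub (egf_exp c) (egf_one R)).

Lemma egf_deriv_exp c : egf_deriv (egf_exp c) = egf_scale c (egf_exp c).
Proof. by apply: functional_extensionality => n; rewrite /egf_deriv /egf_exp exprS. Qed.

Lemma egf_deriv_expm1 c : c != 0 ->
  egf_deriv (egf_expm1 c) = egf_add (egf_one R) (egf_scale c (egf_expm1 c)).
Proof.
move=> c0; apply: functional_extensionality => n.
rewrite /egf_deriv /egf_expm1 /egf_add /egf_scale /egf_sub /egf_exp /egf_one /=.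
by rewrite exprS; field.
Qed.

Lemma egf_deriv_pow_expm1 c k : c != 0 ->
  egf_deriv (egf_pow (egf_expm1 c) k) =
  egf_add (egf_scale k%:R (egf_pow (egf_expm1 c) k.-1))
          (egf_scale (k%:R * c) (egf_pow (egf_expm1 c) k)).
Proof.
move=> c0; elim: k => [|k IH]; apply: functional_extensionality => n.
  by rewrite /egf_add /egf_scale /egf_deriv /egf_pow /egf_one /= !mul0r add0r.
rewrite egf_deriv_mul egf_deriv_expm1 // IH egf_mulDl egf_mulZl egf_mul1l.
rewrite egf_mulDr !egf_mulZr /egf_add /egf_scale.
by case: k {IH} => [|k]; rewrite /= ?mulrS; ring.
Qed.

Lemma egf_deriv_1p_log1p c : egf_deriv_1p c (egf_log1p c) = egf_scale c (egf_one R).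
Proof.
apply: functional_extensionality => -[|n]; rewrite /egf_log1p.
  by rewrite /egf_deriv_1p /egf_add /egf_scale /egf_deriv /egf_zderiv /=; field.
rewrite /egf_deriv_1p /egf_add /egf_scale /egf_deriv /egf_zderiv /egf_one /=.
rewrite factS natrM !exprS.
by field; rewrite addrC natr1 -natrD !pnatr_eq0.
Qed.

Lemma egf_deriv_1p_pow_log1p c k :
  egf_deriv_1p c (egf_pow (egf_log1p c) k) =
  egf_scale (k%:R * c) (egf_pow (egf_log1p c) k.-1).
Proof.
elim: k => [|k IH]; apply: functional_extensionality => n.
  rewrite /egf_deriv_1p /egf_add /egf_scale /egf_deriv /egf_zderiv /egf_pow /egf_one /=.
  by case: n => [|n]; rewrite !mul0r ?mulr0 ?addr0.
rewrite egf_deriv_1p_mul egf_deriv_1p_log1p IH egf_mulZl egf_mul1l egf_mulZr /egf_scale.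
by case: k {IH} => [|k]; rewrite /= ?mulrS; ring.
Qed.

Lemma egf_deriv_1p_binom a c :
  egf_deriv_1p c (egf_binom a c) = egf_scale (a * c) (egf_binom a c).
Proof.
apply: functional_extensionality => n.
rewrite /egf_deriv_1p /egf_add /egf_scale /egf_deriv /egf_zderiv /egf_binom.
by rewrite big_ord_recr exprS /=; ring.
Qed.

End WhitneyGeneratingFunctions.

Section WhitneyRecurrences.
Variables (R : numFieldType) (m r : nat).
Hypothesis m_gt0 : (0 < m)%N.

Let mR0 : m%:R != 0 :> R. Proof. by rewrite pnatr_eq0 -lt0n. Qed.
Let fact_neq0 k : k`!%:R != 0 :> R. Proof. by rewrite pnatr_eq0 -lt0n fact_gt0. Qed.

Lemma whitney1_0n k : whitney1 R m r 0 k = (k == 0)%:R.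
Proof.
rewrite /whitney1 egf_mul0 /egf_scale /egf_binom big_ord0 expr0 mul1r.
case: k => [|k]; first by rewrite /egf_one expr0 !mul1r invr1 mulr1.
by rewrite /= egf_mul0 /egf_log1p !(mulr0, mul0r).
Qed.

Lemma whitney2_0n k : whitney2 R m r 0 k = (k == 0)%:R.
Proof.
rewrite /whitney2 egf_mul0 /egf_scale /egf_exp expr0 mul1r.
case: k => [|k]; first by rewrite /egf_one invr1 mul1r.
by rewrite /= egf_mul0 /egf_sub /egf_exp /egf_one expr0 subrr !(mulr0, mul0r).
Qed.

Lemma whitney1S n k :
  whitney1 R m r n.+1 k = - (r%:R + m%:R * n%:R) * whitney1 R m r n k +
                          (if k is k'.+1 then whitney1 R m r n k' else 0).
Proof.
rewrite /whitney1 (egf_deriv_1pE m%:R) egf_deriv_1p_mul egf_deriv_1p_binom.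
rewrite egf_deriv_1p_scale egf_deriv_1p_pow_log1p egf_mulZl !egf_mulZr.
case: k => [|k]; first by field; rewrite fact_neq0 mR0.
have scale_step : (m%:R ^+ k.+1 * k.+1`!%:R)^-1 * (k.+1%:R * m%:R) =
                  (m%:R ^+ k * k`!%:R)^-1 :> R.
  rewrite exprS factS natrM; field.
  by rewrite fact_neq0 expf_neq0 // mR0 addrC natr1 pnatr_eq0.
rewrite egf_mulZr -scale_step.
by field; rewrite fact_neq0 expf_neq0 mR0.
Qed.

Lemma whitney2S n k :
  whitney2 R m r n.+1 k = (r%:R + m%:R * k%:R) * whitney2 R m r n k +
                          (if k is k'.+1 then whitney2 R m r n k' else 0).
Proof.
rewrite /whitney2 -[LHS]/(egf_deriv _ n) egf_deriv_mul egf_deriv_exp.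
rewrite -/(egf_expm1 m%:R).
have -> : egf_deriv (egf_scale k`!%:R^-1 (egf_pow (egf_expm1 m%:R) k)) =
          egf_scale k`!%:R^-1 (egf_deriv (egf_pow (egf_expm1 m%:R) k)) by [].
rewrite egf_deriv_pow_expm1 // egf_mulZl !egf_mulZr egf_mulDr !egf_mulZr.
case: k => [|k]; first by ring.
have scale_step : k.+1`!%:R^-1 * k.+1%:R = k`!%:R^-1 :> R.
  by rewrite factS natrM; field; rewrite fact_neq0 addrC natr1 pnatr_eq0.
rewrite egf_mulZr -scale_step; ring.
Qed.

End WhitneyRecurrences.

Lemma euler_poly_binomial (R : numFieldType) n (x : R) :
  euler_poly n x = \sum_(l < n.+1) 'C(n, l)%:R * euler_num R (n - l) * x ^+ l.
Proof.
have euler_numE k : euler_num R k = 2 * egf_inv (egf_add (egf_exp 1) (egf_one R)) k.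
  rewrite /euler_num /euler_poly /egf_mul big_ord_recl big1 => [|i _].
    by rewrite bin0 subn0 /egf_scale /egf_exp expr0 mulr1 mul1r addr0.
  by rewrite /egf_scale /egf_exp expr0n /= !(mulr0, mul0r).
rewrite /euler_poly /egf_mul; apply: eq_bigr => l _.
by rewrite euler_numE /egf_scale /egf_exp; ring.
Qed.

Theorem mainTheorem15 (R : numFieldType) (m r n : nat) (hm : (1 <= m)%N) (x : R) :
  euler_poly n x =
  \sum_(0 <= k < n.+1) \sum_(k <= l < n.+1)
     'C(n, l)%:R * @euler_num R (n - l) * @whitney1 R m r l k * dowling m r k x.
Proof.
pose c i : R := r%:R + m%:R * i%:R.
have w1S : forall l k, whitney1 R m r l.+1 k = - c l * _ + _ := whitney1S R m r hm.
have w2S : forall k j, whitney2 R m r k.+1 j = c j * _ + _ := whitney2S R m r hm.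
have w1_0 := whitney1_0n R m r; have w2_0 := whitney2_0n R m r.
have extend k : (0 <= k < n.+1)%N ->
    \sum_(k <= l < n.+1) 'C(n, l)%:R * euler_num R (n - l) *
      whitney1 R m r l k * dowling m r k x =
    \sum_(0 <= l < n.+1) 'C(n, l)%:R * euler_num R (n - l) *
      whitney1 R m r l k * dowling m r k x.
  move=> /andP[_ ltkn]; rewrite [RHS](big_cat_nat (leq0n k) (ltnW ltkn)) /=.
  rewrite -[LHS]add0r; congr (_ + _); rewrite big_nat big1 // => l /andP[_ ltlk].
  by rewrite (triangular_rec_eq0 w1_0 w1S) // mulr0 mul0r.
rewrite (eq_big_nat _ _ extend) exchange_big_nat big_mkord euler_poly_binomial.
apply: eq_bigr => l _.
have := triangular_rec_inverse_pow w1_0 w2_0 w1S w2S _ _ x (ltn_ord l).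
rewrite big_mkord => <-; rewrite mulr_sumr.
by apply: eq_bigr => k _; rewrite mulrA.
Qed.
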